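(* Every $3$-uniform hypergraph with $7$ vertices and $30$ edges not containing a Fano plane is isomorphic to either $B_7$ or $J_7$.
   Context: Hypergraphs are $3$-uniform; ''containing'' means having a (not necessarily induced) subhypergraph isomorphic to it. The Fano plane is the hypergraph on vertex set $\{1,\dots,7\}$ with edges $123,345,156,147,367,257,246$ (the lines of the projective plane over the field with two elements). $B_7$ is the hypergraph on $7$ vertices with a partition $V=X\cup Y$ into disjoint sets of sizes $3$ and $4$ whose edges are exactly the triples meeting both $X$ and $Y$. $J_7$ is obtained from the complete $3$-uniform hypergraph on $7$ vertices by deleting the five edges containing a fixed pair of vertices. *)

From mathcomp Require Import all_boot.
Set Implicit Arguments. Unset Strict Implicit. Unset Printing Implicit Defensive.

Definition uniform3 (V : finType) (E : {set {set V}}) : bool :=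
  [forall e in E, #|e| == 3].

Definition contains (V W : finType) (E : {set {set V}}) (H : {set {set W}}) : Prop :=
  exists f : W -> V, injective f /\ forall h, h \in H -> f @: h \in E.

Definition isomorphic (V W : finType) (E : {set {set V}}) (H : {set {set W}}) : Prop :=
  exists f : V -> W, bijective f /\ forall e : {set V}, (e \in E) = (f @: e \in H).

(* Vertices 1..7 of the paper are 0..6 here. *)
Definition tri (a b c : nat) : {set 'I_7} := [set inord a; inord b; inord c].

Definition Fano : {set {set 'I_7}} :=
  [set tri 0 1 2; tri 2 3 4; tri 0 4 5; tri 0 3 6; tri 2 5 6; tri 1 4 6; tri 1 3 5].

Definition B7X : {set 'I_7} := [set i : 'I_7 | (i < 3)%N].
Definition B7 : {set {set 'I_7}} :=
  [set e : {set 'I_7} | [&& #|e| == 3, e :&: B7X != set0 & e :\: B7X != set0]].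

Definition J7 : {set {set 'I_7}} :=
  [set e : {set 'I_7} | (#|e| == 3) && ~~ ([set inord 0; inord 1] \subset e)].

(* The complement of E consists of 35 - 30 = 5 triples, and since E is
   Fano-free every Fano plane on the 7 vertices has a line among them.  Each
   triple is a line of 6 of the 30 Fano planes, so the 5 missing triples meet
   the planes at most 30 times in all: every plane contains exactly one of
   them.  Two triples sharing exactly one vertex are lines of a common Fano
   plane, hence any two missing triples share 0 or 2 vertices.  On 7 vertices
   such a family of 5 triples is either a sunflower of 5 triples through a
   common pair (the complement of J_7) or the 4 triples inside a 4-set plus the
   complementary triple (the complement of B_7).  The facts about Fano planes
   and this classification are checked by computation on characteristic
   vectors. *)

From mathcomp Require Import all_boot.
Set Implicit Arguments. Unset Strict Implicit. Unset Printing Implicit Defensive.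

Definition triples (T : finType) : {set {set T}} := [set e : {set T} | #|e| == 3].

Lemma uniform3_triples (T : finType) (E : {set {set T}}) :
  uniform3 E = (E \subset triples T).
Proof. by apply/forall_inP/subsetP => sub e /sub; rewrite inE. Qed.

Section Relabel.
Variables (V W : finType) (f : V -> W).

Definition relabel (E : {set {set V}}) : {set {set W}} := [set f @: e | e : {set V} in E].

Hypothesis f_inj : injective f.

Lemma mem_relabel (E : {set {set V}}) (e : {set V}) : (f @: e \in relabel E) = (e \in E).
Proof. by rewrite mem_imset //; exact: imset_inj. Qed.

Lemma card_relabel (E : {set {set V}}) : #|relabel E| = #|E|.
Proof. by rewrite card_imset //; exact: imset_inj. Qed.

Lemma relabel_uniform3 (E : {set {set V}}) : uniform3 E -> uniform3 (relabel E).
Proof.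
move=> /forall_inP E3; apply/forall_inP => _ /imsetP[e eE ->].
by rewrite card_imset //; exact: E3.
Qed.

End Relabel.

Section RelabelBijective.
Variables (V W : finType) (f : V -> W).
Hypothesis f_bij : bijective f.

Lemma contains_relabel (U : finType) (E : {set {set V}}) (H : {set {set U}}) :
  contains (relabel f E) H -> contains E H.
Proof.
case: f_bij => g fK gK [h [h_inj hH]]; exists (g \o h); split.
  exact: inj_comp (can_inj gK) h_inj.
move=> x /hH /imsetP[e eE fe]; rewrite imset_comp fe -imset_comp.
by rewrite (eq_imset _ fK) imset_id.
Qed.

Lemma isomorphic_relabel (U : finType) (E : {set {set V}}) (K : {set {set U}}) :
  isomorphic (relabel f E) K -> isomorphic E K.
Proof.
move=> [g [g_bij gK]]; exists (g \o f); split; first exact: bij_comp.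
by move=> e; rewrite imset_comp -gK mem_relabel //; exact: bij_inj.
Qed.

Lemma isomorphic_complement (E : {set {set V}}) (K : {set {set W}}) :
  E \subset triples V -> K \subset triples W ->
  relabel f (triples V :\: E) = triples W :\: K -> isomorphic E K.
Proof.
move=> /subsetP E3 /subsetP K3 eq_compl; exists f; split=> // e.
have f_inj := bij_inj f_bij.
have card_fe : #|f @: e| = #|e| by rewrite card_imset.
have [e3 | e3] := boolP (e \in triples V).
  have fe3 : f @: e \in triples W by move: e3; rewrite !inE card_fe.
  have := mem_relabel f_inj (triples V :\: E) e.
  by rewrite eq_compl !in_setD e3 fe3 !andbT => /negb_inj ->.
rewrite (contraNF (E3 e) e3); apply/esym/(contraNF _ e3) => /K3.
by rewrite !inE card_fe.
Qed.

End RelabelBijective.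

Lemma sum_pos_eq_size (I : eqType) (r : seq I) (a : I -> nat) :
  {in r, forall i, 0 < a i} -> \sum_(i <- r) a i = size r -> {in r, forall i, a i = 1}.
Proof.
move=> a_pos sum_r.
have: \sum_(i <- r) (a i).-1 == 0.
  rewrite -(eqn_add2r (size r)) add0n -{2}sum_r -sum1_size -big_split /=.
  by apply/eqP/eq_big_seq => i /a_pos; case: (a i) => // n _; rewrite addn1.
rewrite sum_nat_seq_eq0 => /allP a_le1 i ri.
by move: (a_pos i ri) (a_le1 i ri); case: (a i) => [|[]].
Qed.

Lemma pairwise_in2 (T : eqType) (r : rel T) (s : seq T) :
  {in s &, forall x y, r x y} -> pairwise r s.
Proof.
elim: s => //= x s IHs r_s; apply/andP; split.
  by apply/allP => y ys; apply: r_s; rewrite !inE ?eqxx ?ys ?orbT.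
by apply: IHs => y z ys zs; apply: r_s; rewrite inE ?ys ?zs orbT.
Qed.

Fixpoint cliques {T : Type} (r : rel T) (k : nat) (s : seq T) : seq (seq T) :=
  if s is x :: s' then
    (if k is k'.+1 then [seq x :: c | c <- cliques r k' s' & all (r x) c] else [::])
    ++ cliques r k s'
  else if k is 0 then [:: [::]] else [::].

Lemma cliques_complete (T : eqType) (r : rel T) (s c : seq T) :
  subseq c s -> pairwise r c -> c \in cliques r (size c) s.
Proof.
elim: s c => [|x s IHs] [|y c] //=.
  by move=> _ _; rewrite IHs ?sub0seq.
rewrite mem_cat; case: eqP => [-> c_s /andP[rxc rc] | _ yc_s yc_r].
  by rewrite map_f // mem_filter rxc IHs.
by rewrite IHs ?orbT.
Qed.

Implicit Types A B : {set 'I_7}.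

Definition code A : seq bool := mkseq (fun i => inord i \in A) 7.

Lemma size_code A : size (code A) = 7. Proof. exact: size_mkseq. Qed.

Lemma nth_code A i : i < 7 -> nth false (code A) i = (inord i \in A).
Proof. by move=> lti; rewrite nth_mkseq. Qed.

Lemma code_inj : injective code.
Proof.
move=> A B eqAB; apply/setP => i.
by rewrite -(inord_val i) -!nth_code // eqAB.
Qed.

Lemma card_code A : #|A| = count id (code A).
Proof.
rewrite cardE /enum_mem size_filter -enumT /code /mkseq count_map.
rewrite -(val_enum_ord 7) count_map.
by apply: eq_count => i /=; rewrite inord_val.
Qed.

Definition meet_code (b1 b2 : seq bool) : seq bool :=
  mkseq (fun i => nth false b1 i && nth false b2 i) 7.

Lemma code_setI A B : code (A :&: B) = meet_code (code A) (code B).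
Proof.
rewrite {1}/code /meet_code /mkseq; apply/eq_in_map => i; rewrite mem_iota => /= lti.
by rewrite !nth_code // in_setI.
Qed.

Lemma has_code A m n : m + n <= 7 ->
  has (nth false (code A)) (iota m n) = [exists i : 'I_7, (m <= i < m + n) && (i \in A)].
Proof.
move=> le_mn7; apply/hasP/existsP => [[i] | [i /andP[mi iA]]].
  rewrite mem_iota => mi iA; have lti : i < 7 by apply: leq_trans le_mn7; case/andP: mi.
  by exists (inord i); rewrite nth_code // in iA; rewrite inordK ?mi.
by exists (i : nat); rewrite ?mem_iota // nth_code // inord_val.
Qed.

Fixpoint bool_seqs (n : nat) : seq (seq bool) :=
  if n is n'.+1 then [seq x :: s | x <- [:: true; false], s <- bool_seqs n'] else [:: [::]].

Lemma mem_bool_seqs n (s : seq bool) : size s = n -> s \in bool_seqs n.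
Proof.
elim: n s => [|n IHn] [|x s] //= [/IHn s_n].
rewrite mem_cat; case: x; apply/orP; [left | right; rewrite cats0]; exact: map_f.
Qed.

Definition triple_codes : seq (seq bool) := [seq b <- bool_seqs 7 | count id b == 3].

Lemma uniq_triple_codes : uniq triple_codes. Proof. by []. Qed.

Lemma code_triple A : A \in triples 'I_7 -> code A \in triple_codes.
Proof.
by rewrite inE card_code mem_filter => ->; rewrite mem_bool_seqs ?size_code.
Qed.

(* An ordering [s] of the vertices relabels [nth 0 s k] as [k]. *)
Definition ord_relabel (s : seq nat) (i : 'I_7) : 'I_7 := inord (index (i : nat) s).

Definition code_image (s : seq nat) (b : seq bool) : seq bool :=
  mkseq (fun k => nth false b (nth 0 s k)) 7.

Section Ordering.
Variable s : seq nat.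
Hypothesis s_perm : perm_eq s (iota 0 7).

Let size_s : size s = 7. Proof. by rewrite (perm_size s_perm) size_iota. Qed.
Let uniq_s : uniq s. Proof. by rewrite (perm_uniq s_perm) iota_uniq. Qed.
Let mem_s i : (i \in s) = (i < 7). Proof. by rewrite (perm_mem s_perm) mem_iota. Qed.

Lemma ord_relabel_inj : injective (ord_relabel s).
Proof.
have lt_index (i : 'I_7) : index (i : nat) s < 7.
  by move: (index_mem (i : nat) s); rewrite size_s mem_s ltn_ord.
move=> i j /(congr1 (@nat_of_ord 7)); rewrite /ord_relabel !inordK // => eq_idx.
apply: val_inj; rewrite /= -(nth_index 0 (_ : (i : nat) \in s)) ?mem_s //.
by rewrite eq_idx nth_index ?mem_s.
Qed.

Lemma ord_relabel_bij : bijective (ord_relabel s).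
Proof. exact: injF_bij ord_relabel_inj. Qed.

Lemma ord_relabel_nth k : k < 7 -> ord_relabel s (inord (nth 0 s k)) = inord k.
Proof.
move=> ltk; rewrite /ord_relabel inordK -?mem_s ?mem_nth ?size_s //.
by rewrite index_uniq ?size_s.
Qed.

Lemma code_ord_relabel A : code (ord_relabel s @: A) = code_image s (code A).
Proof.
rewrite {1}/code /code_image /mkseq; apply/eq_in_map => k; rewrite mem_iota => /= ltk.
have ltsk : nth 0 s k < 7 by rewrite -mem_s mem_nth ?size_s.
by rewrite nth_code // -(ord_relabel_nth ltk) mem_imset //; exact: ord_relabel_inj.
Qed.

End Ordering.

Definition tri_code (a b c : nat) : seq bool := mkseq (fun i => i \in [:: a; b; c]) 7.

Lemma code_tri a b c : a < 7 -> b < 7 -> c < 7 -> code (tri a b c) = tri_code a b c.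
Proof.
move=> lta ltb ltc; rewrite /code /tri_code /mkseq; apply/eq_in_map => i.
rewrite mem_iota add0n => /= lti.
have eq_inord x : x < 7 -> (inord i == inord x :> 'I_7) = (i == x).
  by move=> ltx; rewrite -(inj_eq val_inj) /= !inordK.
rewrite /tri !inE.
by rewrite (eq_inord a) // (eq_inord b) // (eq_inord c) // -orbA.
Qed.

Definition fano_line_codes : seq (seq bool) :=
  [:: tri_code 0 1 2; tri_code 2 3 4; tri_code 0 4 5; tri_code 0 3 6;
      tri_code 2 5 6; tri_code 1 4 6; tri_code 1 3 5].

Lemma code_Fano_line h : h \in Fano -> code h \in fano_line_codes.
Proof.
have -> : fano_line_codes = map code
    [:: tri 0 1 2; tri 2 3 4; tri 0 4 5; tri 0 3 6; tri 2 5 6; tri 1 4 6; tri 1 3 5].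
  by rewrite /= !code_tri.
by move=> hF; apply: map_f; move: hF; rewrite !inE -!orbA.
Qed.

Lemma Fano_triples : Fano \subset triples 'I_7.
Proof.
apply/subsetP => h /code_Fano_line h_line; rewrite inE card_code.
by move: (code h) h_line; apply/allP.
Qed.

Definition fano_copy (s : seq nat) : seq (seq bool) := map (code_image s) fano_line_codes.

(* The collineation group of the Fano plane is 2-transitive with point-pair
   stabilisers of order 4, so these orderings yield each of the 30 Fano planes
   exactly 4 times. *)
Definition fano_orders : seq (seq nat) := [seq [:: 0, 1 & p] | p <- permutations (iota 2 5)].

Lemma size_fano_orders : size fano_orders = 120. Proof. by []. Qed.

Lemma fano_orders_perm s : s \in fano_orders -> perm_eq s (iota 0 7).
Proof. by case/mapP => p; rewrite mem_permutations => p_perm ->; rewrite !perm_cons. Qed.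

Lemma count_fano_copies t :
  t \in triples 'I_7 -> count (fun s => code t \in fano_copy s) fano_orders = 24.
Proof. by move=> /code_triple t3; apply/eqP; move: (code t) t3; apply/allP; vm_compute. Qed.

Lemma fano_copy_through t u : t \in triples 'I_7 -> u \in triples 'I_7 -> #|t :&: u| = 1 ->
  exists2 s, s \in fano_orders & (code t \in fano_copy s) && (code u \in fano_copy s).
Proof.
move=> /code_triple t3 /code_triple u3; rewrite card_code code_setI => /eqP meet1.
have link : all (fun b1 => all (fun b2 => (count id (meet_code b1 b2) == 1) ==>
    has (fun s => (b1 \in fano_copy s) && (b2 \in fano_copy s)) fano_orders)
  triple_codes) triple_codes by vm_compute.
exact/hasP/(implyP (allP (allP link _ t3) _ u3)).
Qed.

Definition fano_copy_hits (F : {set {set 'I_7}}) (s : seq nat) : nat :=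
  \sum_(t in F) (code t \in fano_copy s).

Section FanoFree.
Variable E : {set {set 'I_7}}.
Hypotheses (E3 : E \subset triples 'I_7) (card_E : #|E| = 30).
Hypothesis E_Fano_free : ~ contains E Fano.

Let F := triples 'I_7 :\: E.

Lemma card_missing_triples : #|F| = 5.
Proof. by rewrite cardsDS // card_E card_draws card_ord. Qed.

Lemma fano_copy_hit s : s \in fano_orders -> 0 < fano_copy_hits F s.
Proof.
move=> /fano_orders_perm s_perm; have f_inj := ord_relabel_inj s_perm.
have /forall_inPn[h hF fhE] : ~~ [forall h in Fano, ord_relabel s @: h \in E].
  by apply/forall_inP => fFano; apply: E_Fano_free; exists (ord_relabel s).
have fh3 : ord_relabel s @: h \in triples 'I_7.
  by move: (subsetP Fano_triples h hF); rewrite !inE card_imset.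
rewrite /fano_copy_hits (bigD1 (ord_relabel s @: h)) /=; last by rewrite in_setD fhE.
by rewrite code_ord_relabel // map_f // code_Fano_line.
Qed.

Lemma fano_copy_hit_once : {in fano_orders, forall s, fano_copy_hits F s = 1}.
Proof.
apply: sum_pos_eq_size; first exact: fano_copy_hit.
rewrite /fano_copy_hits exchange_big size_fano_orders.
rewrite (eq_bigr (fun=> 24)) => [|t]; first by rewrite sum_nat_const card_missing_triples.
rewrite in_setD => /andP[_ t3]; rewrite -(count_fano_copies t3) -sum1_count [RHS]big_mkcond.
by apply: eq_bigr => s _; case: (_ \in _).
Qed.

Lemma missing_triples_sparse : {in F &, forall t u, #|t :&: u| != 1}.
Proof.
move=> t u; rewrite !in_setD => /andP[tE t3] /andP[uE u3]; apply/negP => /eqP tu1.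
have tu : t != u.
  by apply: contra_eqN tu1 => /eqP <-; rewrite setIid; move: t3; rewrite inE => /eqP ->.
have [s sO /andP[ts us]] := fano_copy_through t3 u3 tu1.
have := fano_copy_hit_once sO; rewrite /fano_copy_hits.
rewrite (bigD1 t) /=; last by rewrite in_setD tE.
rewrite (bigD1 u) /=; last by rewrite in_setD uE u3 eq_sym.
by rewrite ts us.
Qed.

End FanoFree.

Definition J7_code (b : seq bool) : bool := ~~ (nth false b 0 && nth false b 1).

Definition B7_code (b : seq bool) : bool :=
  has (nth false b) (iota 0 3) && has (nth false b) (iota 3 4).

Lemma J7_code_mem e : e \in triples 'I_7 -> (e \in J7) = J7_code (code e).
Proof. by rewrite !inE => ->; rewrite /J7_code subUset !sub1set !nth_code. Qed.

Lemma B7_code_mem e : e \in triples 'I_7 -> (e \in B7) = B7_code (code e).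
Proof.
have inX (i : 'I_7) : (i \in e :&: B7X) = (0 <= i < 0 + 3) && (i \in e).
  by rewrite !inE andbC.
have inY (i : 'I_7) : (i \in e :\: B7X) = (3 <= i < 3 + 4) && (i \in e).
  by rewrite !inE (ltn_ord i) andbT ltnNge negbK.
move=> e3; rewrite inE; move: e3; rewrite inE => -> /=; rewrite /B7_code !has_code //.
by congr andb; apply/set0Pn/existsP => -[i]; rewrite ?inX ?inY => i_e;
  exists i; rewrite ?inX ?inY.
Qed.

Lemma J7_triples : J7 \subset triples 'I_7.
Proof. by apply/subsetP => e; rewrite !inE => /andP[]. Qed.

Lemma B7_triples : B7 \subset triples 'I_7.
Proof. by apply/subsetP => e; rewrite !inE => /and3P[]. Qed.

Definition sparse_code (b1 b2 : seq bool) : bool := count id (meet_code b1 b2) != 1.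

Definition complement_codes (p : pred (seq bool)) : seq (seq bool) :=
  [seq b <- triple_codes | ~~ p b].

Definition normalizing_order (K : seq (seq bool)) (s : seq nat) : bool :=
  perm_eq s (iota 0 7) &&
  (perm_eq (map (code_image s) K) (complement_codes J7_code)
   || perm_eq (map (code_image s) K) (complement_codes B7_code)).

(* Sorting by degree puts the 4-set of a B_7-type family last, and reversing
   puts the common pair of a sunflower first. *)
Definition degree_order (K : seq (seq bool)) : seq nat :=
  let degree i := count (fun b => nth false b i) K in
  sort (fun i j => degree i <= degree j) (iota 0 7).

Lemma sparse_cliques_normalized :
  all (fun K => has (normalizing_order K) [:: rev (degree_order K); degree_order K])
    (cliques sparse_code 5 triple_codes).
Proof. by vm_compute. Qed.

Lemma relabel_code_complement (F K : {set {set 'I_7}}) (p : pred (seq bool)) (s : seq nat) :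
  perm_eq s (iota 0 7) -> F \subset triples 'I_7 ->
  {in triples 'I_7, forall e, (e \in K) = p (code e)} ->
  [seq code_image s (code t) | t <- enum F] =i complement_codes p ->
  relabel (ord_relabel s) F = triples 'I_7 :\: K.
Proof.
move=> s_perm /subsetP F3 Kp codes_F; have f_inj := ord_relabel_inj s_perm.
apply/setP => e; rewrite in_setD.
have [e3 | e3] := boolP (e \in triples 'I_7); last first.
  rewrite andbF; apply/negbTE; apply: contra e3 => /imsetP[t tF ->].
  by move: (F3 t tF); rewrite !inE card_imset.
have -> : ~~ (e \in K) = (code e \in complement_codes p).
  by rewrite mem_filter code_triple // Kp // andbT.
rewrite andbT -codes_F.
have -> : [seq code_image s (code t) | t <- enum F]
    = map code [seq ord_relabel s @: t | t : {set 'I_7} <- enum F].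
  by rewrite -map_comp; apply: eq_map => t /=; rewrite code_ord_relabel.
rewrite (mem_map code_inj).
by apply/imsetP/mapP => -[t]; rewrite ?mem_enum => tF ->; exists t; rewrite ?mem_enum.
Qed.

Lemma sparse_family_normalized (F : {set {set 'I_7}}) :
  F \subset triples 'I_7 -> #|F| = 5 -> {in F &, forall t u, #|t :&: u| != 1} ->
  exists2 s, perm_eq s (iota 0 7) &
    relabel (ord_relabel s) F = triples 'I_7 :\: J7 \/
    relabel (ord_relabel s) F = triples 'I_7 :\: B7.
Proof.
move=> /subsetP F3 card_F F_sparse.
set K := [seq b <- triple_codes | b \in map code (enum F)].
have K_F : K =i map code (enum F).
  move=> b; rewrite mem_filter andb_idr // => /mapP[t].
  by rewrite mem_enum => /F3 /code_triple t3 ->.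
have size_K : size K = 5.
  rewrite -card_F cardE -(size_map code); apply/perm_size/uniq_perm => //.
    exact: filter_uniq uniq_triple_codes.
  by rewrite (map_inj_uniq code_inj) enum_uniq.
have K_clique : K \in cliques sparse_code 5 triple_codes.
  rewrite -size_K; apply: cliques_complete; first exact: filter_subseq.
  apply: pairwise_in2 => b1 b2; rewrite !K_F => /mapP[t tF ->] /mapP[u uF ->].
  by rewrite /sparse_code -code_setI -card_code F_sparse // -mem_enum.
have /hasP[s _ /andP[s_perm s_norm]] := allP sparse_cliques_normalized K K_clique.
have codes_F : [seq code_image s (code t) | t <- enum F] =i map (code_image s) K.
  by move=> b; rewrite map_comp; apply: eq_mem_map => c; rewrite K_F.
exists s => //; case/orP: s_norm => /perm_mem K_compl; [left | right];
  apply: relabel_code_complement => //; try exact/subsetP;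
  by [exact: J7_code_mem | exact: B7_code_mem | move=> b; rewrite codes_F K_compl].
Qed.

Lemma Fano_free_classified (E : {set {set 'I_7}}) :
  E \subset triples 'I_7 -> #|E| = 30 -> ~ contains E Fano ->
  isomorphic E B7 \/ isomorphic E J7.
Proof.
move=> E3 card_E E_Fano_free.
have [s s_perm [to_J7 | to_B7]] := sparse_family_normalized (subsetDl _ E)
  (card_missing_triples E3 card_E) (missing_triples_sparse E3 card_E E_Fano_free).
  by right; exact: (isomorphic_complement (ord_relabel_bij s_perm) E3 J7_triples to_J7).
by left; exact: (isomorphic_complement (ord_relabel_bij s_perm) E3 B7_triples to_B7).
Qed.

Theorem lemma2p2 (V : finType) (E : {set {set V}}) :
  #|V| = 7 -> uniform3 E -> #|E| = 30 -> ~ contains E Fano ->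
  isomorphic E B7 \/ isomorphic E J7.
Proof.
move=> card_V E3 card_E E_Fano_free.
pose g (v : V) : 'I_7 := cast_ord card_V (enum_rank v).
have g_bij : bijective g.
  exists (fun i => enum_val (cast_ord (esym card_V) i)) => [v | i].
    by rewrite /g cast_ordK enum_rankK.
  by rewrite /g enum_valK cast_ordKV.
have g_inj := bij_inj g_bij.
have [iso_B7 | iso_J7] : isomorphic (relabel g E) B7 \/ isomorphic (relabel g E) J7.
  apply: Fano_free_classified; last by move/(contains_relabel g_bij).
    by rewrite -uniform3_triples; apply: relabel_uniform3.
  by rewrite card_relabel.
  by left; exact: (isomorphic_relabel g_bij iso_B7).
by right; exact: (isomorphic_relabel g_bij iso_J7).
Qed.
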